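(* Let $X$ be a finite rack. Then every irreducible strong representation of $X$ is either trivial (the zero representation) or finite-dimensional.
   Context: A rack is a set $X$ with a binary operation $\rhd$ such that each map $x\mapsto x\rhd y$ is bijective and $(x\rhd y)\rhd z=(x\rhd z)\rhd(y\rhd z)$. A stabilizing family of $X$ is a finite family $(u_1,\ldots,u_n)$ in $X$ with $(\cdots(x\rhd u_1)\cdots)\rhd u_n=x$ for all $x\in X$. A representation of $X$ is a complex vector space $V$ with a map $\pi:X\to GL(V)$ such that $\pi_{x\rhd y}=\pi_y\pi_x\pi_y^{-1}$ for all $x,y$. It is strong if for every stabilizing family $(u_1,\ldots,u_n)$ one has $\pi_{u_n}\cdots\pi_{u_1}=\mathrm{id}_V$. A subrepresentation is a subspace invariant under all $\pi_x$; the representation is irreducible if its only subrepresentations are $\{0\}$ and $V$. *)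

From mathcomp Require Import all_boot all_algebra.
From mathcomp Require Import complex.
From mathcomp Require Import Rstruct.

Set Implicit Arguments.
Unset Strict Implicit.
Unset Printing Implicit Defensive.
Import GRing.Theory.
Local Open Scope ring_scope.

Notation CC := (Rdefinitions.R)[i].

Section Racks.
Variable X : Type.
Variable op : X -> X -> X.   (* x |> y := op x y *)

Definition is_rack : Prop :=
  (forall y, bijective (fun x => op x y)) /\
  (forall x y z, op (op x y) z = op (op x z) (op y z)).

Definition stabilizing (u : seq X) : Prop :=
  forall x, foldl op x u = x.
End Racks.

Section Reps.
Variables (X : Type) (op : X -> X -> X) (V : lmodType CC).

(* pi x is an element of GL(V): a linear map with a two-sided inverse
   pinv x, which is then linear as well. *)
Definition in_GL (f g : V -> V) : Prop :=
  linear f /\ cancel f g /\ cancel g f.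

Definition is_rack_rep (pi pinv : X -> V -> V) : Prop :=
  (forall x, in_GL (pi x) (pinv x)) /\
  (forall x y, pi (op x y) =1 pi y \o pi x \o pinv y).

(* pi_{u_n} ... pi_{u_1} *)
Definition rep_prod (pi : X -> V -> V) (u : seq X) : V -> V :=
  foldl (fun f a => pi a \o f) id u.

Definition is_strong (pi : X -> V -> V) : Prop :=
  forall u : seq X, stabilizing op u -> rep_prod pi u =1 id.

Definition is_subspace (W : V -> Prop) : Prop :=
  W 0 /\ (forall v w, W v -> W w -> W (v + w)) /\
  (forall (c : CC) v, W v -> W (c *: v)).

Definition is_subrep (pi : X -> V -> V) (W : V -> Prop) : Prop :=
  is_subspace W /\ (forall x v, W v -> W (pi x v)).

Definition is_irreducible (pi : X -> V -> V) : Prop :=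
  forall W, is_subrep pi W ->
    (forall v, W v <-> v = 0) \/ (forall v, W v).

Definition is_zero_space : Prop := forall v : V, v = 0.

Definition finite_dim : Prop :=
  exists (n : nat) (b : 'I_n -> V),
    forall v : V, exists c : 'I_n -> CC, v = \sum_(i < n) c i *: b i.
End Reps.

(* A word u = (u_1,...,u_n) in X acts on X by x |-> (...(x |> u_1)...) |> u_n,
   through a permutation of the finite set X.  That permutation has finite
   order, so some word s undoes u on both sides.  Writing
   pi_u := pi_{u_n}...pi_{u_1}, strongness gives pi_s pi_w = id = pi_u pi_s
   for every word w acting as u does, so pi_w = pi_u.  Hence, for a fixed v,
   pi_u v depends only on the map X -> X induced by u and takes finitely many
   values.  Their span is a subrepresentation containing v, hence all of V
   when v <> 0. *)

From mathcomp Require Import all_boot all_algebra.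
From mathcomp Require Import complex.
From mathcomp Require Import Rstruct.
From mathcomp Require Import fingroup perm.
From Stdlib Require Import ClassicalEpsilon.

Set Implicit Arguments.
Unset Strict Implicit.
Unset Printing Implicit Defensive.
Import GRing.Theory.
Local Open Scope ring_scope.

Section WordAction.
Variables (X : finType) (op : X -> X -> X).
Hypothesis op_bij : forall y, bijective (op^~ y).

Definition act (u : seq X) (x : X) : X := foldl op x u.

Lemma act_cat u w x : act (u ++ w) x = act w (act u x).
Proof. by rewrite /act foldl_cat. Qed.

Lemma act_pow k u x : act (flatten (nseq k u)) x = iter k (act u) x.
Proof. by elim: k x => [|k IHk] x //=; rewrite act_cat IHk -iterSr. Qed.

Lemma act_inj u : injective (act u).
Proof.
elim: u => [|y u IHu] x1 x2 // act_eq.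
exact/(bij_inj (op_bij y))/IHu.
Qed.

Lemma exists_act_inverse u :
  exists s, act (u ++ s) =1 id /\ act (s ++ u) =1 id.
Proof.
pose p := perm (@act_inj u).
have act_order x : iter #[p]%g (act u) x = x.
  have := permX p x #[p]%g; rewrite expg_order perm1 => {2}->.
  by apply: eq_iter => y; rewrite permE.
exists (flatten (nseq (#[p]%g).-1 u)).
split=> x; rewrite act_cat act_pow; first rewrite -iterSr; last rewrite -iterS.
all: by rewrite prednK ?order_gt0.
Qed.

End WordAction.

Lemma rep_prod_cat (X : Type) (V : lmodType CC) (pi : X -> V -> V) u w :
  rep_prod pi (u ++ w) =1 rep_prod pi w \o rep_prod pi u.
Proof.
move=> v; rewrite /rep_prod foldl_cat /=.
elim: w (foldl _ id u) v => [|y w IHw] f v //=.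
by rewrite IHw /= (IHw (pi y \o id)).
Qed.

Lemma rep_prod_rcons (X : Type) (V : lmodType CC) (pi : X -> V -> V) u x v :
  rep_prod pi (rcons u x) v = pi x (rep_prod pi u v).
Proof. by rewrite -cats1 rep_prod_cat. Qed.

Lemma strong_rep_prod_act (X : finType) (op : X -> X -> X)
    (V : lmodType CC) (pi : X -> V -> V) :
  (forall y, bijective (op^~ y)) -> is_strong op pi ->
  forall u w, act op w =1 act op u -> rep_prod pi w =1 rep_prod pi u.
Proof.
move=> op_bij pi_strong u w act_wu v.
have [s [act_us act_su]] := exists_act_inverse op_bij u.
have stab_ws : stabilizing op (w ++ s).
  by move=> x; rewrite -/(act _ _ x) act_cat act_wu -act_cat act_us.
have stab_su : stabilizing op (s ++ u) by exact: act_su.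
have := pi_strong _ stab_ws v; rewrite rep_prod_cat /= => rep_sw.
have := pi_strong _ stab_su (rep_prod pi w v).
by rewrite rep_prod_cat /= rep_sw => <-.
Qed.

Lemma finite_image_of_factor (A B : Type) (T : finType) (k : A -> T) (g : A -> B) :
  inhabited A -> (forall u w, k u = k w -> g u = g w) ->
  exists b : 'I_#|T| -> B,
    (forall u, exists i, g u = b i) /\ (forall i, exists u, b i = g u).
Proof.
move=> inhA g_factor.
pose word t := epsilon inhA (fun u => k u = t).
exists (fun i => g (word (enum_val i))); split=> [u|i]; last by eexists.
exists (enum_rank (k u)); rewrite enum_rankK; apply: g_factor.
by rewrite (epsilon_spec inhA (fun w => k w = k u)) //; exists u.
Qed.

Section Span.
Variables (V : lmodType CC) (n : nat) (b : 'I_n -> V).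

Definition span (w : V) : Prop := exists c : 'I_n -> CC, w = \sum_(i < n) c i *: b i.

Lemma span_subspace : is_subspace span.
Proof.
split; first by exists (fun=> 0); rewrite big1 // => i _; rewrite scale0r.
split=> [_ _ [c1 ->] [c2 ->] | a _ [c ->]].
  exists (fun i => c1 i + c2 i); rewrite -big_split.
  by apply: eq_bigr => i _; rewrite scalerDl.
exists (fun i => a * c i); rewrite scaler_sumr.
by apply: eq_bigr => i _; rewrite scalerA.
Qed.

Lemma span_gen i : span (b i).
Proof.
exists (fun j => (j == i)%:R); rewrite (bigD1 i) //= eqxx scale1r big1 ?addr0 //.
by move=> j /negbTE ->; rewrite scale0r.
Qed.

Lemma linear_span_stable (f : V -> V) :
  linear f -> (forall i, span (f (b i))) -> forall w, span w -> span (f w).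
Proof.
move=> f_lin f_gen _ [c ->].
have fD : {morph f : x y / x + y}.
  by move=> x y; have := f_lin 1 x y; rewrite !scale1r.
have f0 : f 0 = 0 by apply/(addrI (f 0)); rewrite -fD !addr0.
have fZ a x : f (a *: x) = a *: f x by rewrite -[_ *: x]addr0 f_lin f0 addr0.
have [span0 [spanD spanZ]] := span_subspace.
rewrite (big_morph f fD f0); apply: (big_ind span) => // i _.
by rewrite fZ; apply/spanZ/f_gen.
Qed.

End Span.

Theorem mainTheorem4 (X : finType) (op : X -> X -> X) (Hrack : is_rack op)
  (V : lmodType CC) (pi pinv : X -> V -> V)
  (Hrep : is_rack_rep op pi pinv) (Hstrong : is_strong op pi)
  (Hirr : is_irreducible pi) :
  is_zero_space V \/ finite_dim V.
Proof.
have [|/not_all_ex_not [v v_neq0]] := classic (is_zero_space V); [by left | right].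
have rep_factor u w :
    finfun (act op u) = finfun (act op w) -> rep_prod pi u v = rep_prod pi w v.
  move=> /ffunP act_uw; apply: (strong_rep_prod_act (proj1 Hrack) Hstrong) => x.
  by have := act_uw x; rewrite !ffunE.
have [b [b_orbit orbit_b]] := finite_image_of_factor (inhabits [::]) rep_factor.
have span_subrep : is_subrep pi (span b).
  split=> [|x]; first exact: span_subspace.
  apply: linear_span_stable; first exact: proj1 (proj1 Hrep x).
  move=> i; have [u ->] := orbit_b i.
  by rewrite -rep_prod_rcons; have [j ->] := b_orbit (rcons u x); apply: span_gen.
have v_span : span b v.
  by have [i v_bi] := b_orbit [::]; have -> : v = b i := v_bi; apply: span_gen.
have [span0 | spanT] := Hirr _ span_subrep; last by exists #|{ffun X -> X}|, b.
by case: v_neq0; apply/span0.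
Qed.
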